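(* Let $0<\rho<1$ and let $\mathcal{S}=(S_1,\dots,S_m)$ be a collection of $m$ subsets of $[n]$ with $\mathrm{opt}(\mathcal{S})\le k$. Suppose $U_{\mathrm{smpl}}\subseteq[n]$ is obtained by picking each element of $[n]$ independently with probability $p\ge 16\,k\log m/(\rho n)$. Then, with probability $1-1/m^2$, every collection of $k$ sets in $\mathcal{S}$ that covers $U_{\mathrm{smpl}}$ entirely also covers at least $(1-\rho)n$ elements of $[n]$.
   Context: $\mathrm{opt}(\mathcal{S})$ denotes the minimum number of sets of $\mathcal{S}$ whose union is $[n]$. A collection covers a set $U$ if $U$ is contained in the union of its members. *)

From HB Require Import structures.
From mathcomp Require Import all_boot all_order all_algebra.
From mathcomp Require Import reals exp.
Set Implicit Arguments. Unset Strict Implicit. Unset Printing Implicit Defensive.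
Import Order.TTheory GRing.Theory Num.Theory.
Local Open Scope ring_scope.

Definition union_of (n m : nat) (S : 'I_m -> {set 'I_n}) (I : {set 'I_m})
  : {set 'I_n} := \bigcup_(i in I) S i.

Definition covers (n m : nat) (S : 'I_m -> {set 'I_n}) (I : {set 'I_m})
  (U : {set 'I_n}) : bool := U \subset union_of S I.

Definition opt_le (n m : nat) (S : 'I_m -> {set 'I_n}) (k : nat) : Prop :=
  exists I : {set 'I_m}, (#|I| <= k)%N /\ union_of S I = [set: 'I_n].

(* Probability of the event E when U is a random subset of [n] obtained by
   including each element independently with probability p. *)
Definition sample_prob (R : realType) (n : nat) (p : R)
  (E : pred {set 'I_n}) : R :=
  \sum_(U : {set 'I_n} | E U) p ^+ #|U| * (1 - p) ^+ (n - #|U|).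

(* Union bound over the at most (m+1)^k collections I of at most k sets whose
   union A misses more than rho n points: the sample lies inside A with
   probability (1-p)^(n-|A|) <= exp(-p rho n) <= m^(-16k), and
   (m+1)^k m^(-16k) <= m^(-2).  The hypothesis opt(S) <= k is only needed to
   ensure k >= 1 when n >= 1. *)
From HB Require Import structures.
From mathcomp Require Import all_boot all_order all_algebra.
From mathcomp Require Import reals exp sequences zify lra.
Import Order.TTheory GRing.Theory Num.Theory.
Local Open Scope ring_scope.

Lemma prodr_if_mem {R : comPzSemiRingType} {T : finType} (A : {set T})
    (a b : R) :
  \prod_(i : T) (if i \in A then a else b) = a ^+ #|A| * b ^+ (#|T| - #|A|).
Proof.
rewrite (bigID (mem A)) /= (eq_bigr (fun=> a)) => [|i ->//].
rewrite [X in _ * X](eq_bigr (fun=> b)) => [|i /negbTE ->//].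
rewrite !prodr_const -(cardsC A) addKn; congr (_ * _ ^+ _).
by apply: eq_card => i; rewrite inE.
Qed.

Section SampleProb.
Variables (R : realType) (n : nat) (p : R).
Hypotheses (p_ge0 : 0 <= p) (p_le1 : p <= 1).

Lemma sample_weight_ge0 (U : {set 'I_n}) :
  0 <= p ^+ #|U| * (1 - p) ^+ (n - #|U|).
Proof. by rewrite mulr_ge0 // exprn_ge0 // subr_ge0. Qed.

Lemma sample_weightE (U : {set 'I_n}) :
  p ^+ #|U| * (1 - p) ^+ (n - #|U|) = \prod_i (if i \in U then p else 1 - p).
Proof. by rewrite prodr_if_mem card_ord. Qed.

Lemma sample_prob_ge0 (E : pred {set 'I_n}) : 0 <= sample_prob p E.
Proof. by apply: sumr_ge0 => U _; exact: sample_weight_ge0. Qed.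

Lemma sample_prob_subset (A : {set 'I_n}) :
  sample_prob p (fun U => U \subset A) = (1 - p) ^+ (n - #|A|).
Proof.
have -> : (1 - p) ^+ (n - #|A|) =
    \prod_(i : 'I_n) ((if i \in A then p else 0) + (1 - p)).
  transitivity (\prod_(i : 'I_n) (if i \in A then 1 else 1 - p)).
    by rewrite prodr_if_mem card_ord expr1n mul1r.
  by apply: eq_bigr => i _; case: (i \in A); rewrite ?add0r ?subrKC.
(* Expanding the product over all subsets U, only the U \subset A survive. *)
rewrite bigA_distr [RHS](bigID (fun U : {set _} => U \subset A)) /=.
rewrite [X in _ = _ + X]big1 ?addr0 => [|U /subsetPn [i iU iA]]; last first.
  by rewrite (bigD1 i) //= iU (negbTE iA) mul0r.
apply: eq_bigr => U /subsetP UA; rewrite sample_weightE.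
by apply: eq_bigr => i _; case: ifP => // /UA ->.
Qed.

Lemma sample_probT : sample_prob p (@predT {set 'I_n}) = 1.
Proof.
have := sample_prob_subset setT; rewrite cardsT card_ord subnn expr0 => <-.
by apply: eq_bigl => U; rewrite subsetT.
Qed.

Lemma sample_probC (E : pred {set 'I_n}) :
  sample_prob p E = 1 - sample_prob p (predC E).
Proof.
by rewrite -sample_probT /sample_prob [X in _ = X - _](bigID E) /= addrK.
Qed.

Lemma le_sample_prob (E F : pred {set 'I_n}) :
  (forall U, E U -> F U) -> sample_prob p E <= sample_prob p F.
Proof.
move=> EF; rewrite /sample_prob [X in _ <= X](bigID E) /=.
rewrite (eq_bigl (fun U => F U && E U)) => [|U]; last first.
  by apply/idP/andP => [EU|[]//]; split=> //; exact: EF.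
by rewrite lerDl sumr_ge0 // => U _; exact: sample_weight_ge0.
Qed.

Lemma sample_prob_exists (I : finType) (B : pred I) (E : I -> pred {set 'I_n}) :
  sample_prob p (fun U => [exists (i | B i), E i U]) <=
  \sum_(i | B i) sample_prob p (E i).
Proof.
rewrite /sample_prob (exchange_big_dep predT) //= big_mkcond /=.
apply: ler_sum => U _; have w_ge0 := sample_weight_ge0 U.
case: ifP => [/existsP [i /andP [Bi EiU]] | _]; last exact: sumr_ge0.
by rewrite (bigD1 i) ?Bi //= lerDl sumr_ge0.
Qed.
End SampleProb.

Lemma card_small_sets (T : finType) (k : nat) :
  (#|[set A : {set T} | #|A| <= k]| <= #|T|.+1 ^ k)%N.
Proof.
pose support (f : {ffun 'I_k -> option T}) := [set x | Some x \in codom f].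
apply: (@leq_trans #|support @: setT|); last first.
  apply: leq_trans (leq_imset_card _ _) _.
  by rewrite cardsT card_ffun card_option card_ord.
apply/subset_leq_card/subsetP => A; rewrite inE => A_le_k.
apply/imsetP; exists [ffun i : 'I_k => nth None (map Some (enum A)) i].
  by rewrite inE.
apply/setP => x; rewrite inE; apply/idP/codomP => [xA | [i]].
  have x_lt_k : (index x (enum A) < k)%N.
    by rewrite (leq_trans _ A_le_k) // cardE index_mem mem_enum.
  exists (Ordinal x_lt_k).
  by rewrite ffunE /= (nth_map x) ?nth_index ?index_mem ?mem_enum.
rewrite ffunE; case: (ltnP i (size (enum A))) => i_lt.
  by rewrite (nth_map x) // => [[->]]; rewrite -mem_enum mem_nth.
by rewrite nth_default ?size_map.
Qed.

Lemma expr1B_le_invX (R : realType) (p x : R) (c d : nat) :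
  0 <= p -> p <= 1 -> 0 < x -> c%:R * ln x <= p * d%:R ->
  (1 - p) ^+ d <= (x ^+ c)^-1.
Proof.
move=> p_ge0 p_le1 x_gt0 c_le.
have : (1 - p) ^+ d <= expR (- p) ^+ d.
  by rewrite lerXn2r ?nnegrE ?subr_ge0 ?expR_ge0 // expR_ge1Dx.
move/le_trans; apply.
rewrite -expRM_natl -[x ^+ c]lnK ?posrE ?exprn_gt0 // -expRN ler_expR lnXn //.
by rewrite mulrN lerN2 mulrC -[ln x *+ c]mulr_natl.
Qed.

Lemma sample_prob_subset_le_invX (R : realType) (rho p x : R) (n c : nat)
    (A : {set 'I_n}) :
  0 < rho -> 0 <= p -> p <= 1 -> 0 < x ->
  c%:R * ln x / (rho * n%:R) <= p ->
  #|A|%:R < (1 - rho) * n%:R ->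
  sample_prob p (fun U => U \subset A) <= (x ^+ c)^-1.
Proof.
move=> rho_gt0 p_ge0 p_le1 x_gt0 p_ge A_small.
rewrite sample_prob_subset; apply: expr1B_le_invX => //.
have n_gt0 : 0 < n%:R :> R.
  rewrite lt_neqAle ler0n andbT.
  by apply: contraTneq A_small => <-; rewrite mulr0 -leNgt.
have A_le_n : (#|A| <= n)%N by have := max_card (mem A); rewrite card_ord.
have gap : rho * n%:R <= (n - #|A|)%:R.
  by rewrite natrB // mulrBl mul1r in A_small *; lra.
rewrite ler_pdivrMr ?mulr_gt0 // in p_ge.
exact: le_trans p_ge (ler_wpM2l p_ge0 gap).
Qed.

Lemma expS_mul_sqr_leq (m k c : nat) : (1 < m)%N -> (0 < k)%N -> (4 <= c)%N ->
  (m.+1 ^ k * m ^ 2 <= m ^ (c * k))%N.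
Proof.
move=> m_gt1 k_gt0 c_ge4.
have succ_le : (m.+1 ^ k <= m ^ (2 * k))%N.
  by rewrite expnM leq_exp2r // expnS expn1; nia.
have sqr_le : (m ^ 2 <= m ^ (2 * k))%N by apply: leq_pexp2l; lia.
apply: leq_trans (leq_mul succ_le sqr_le) _.
by rewrite -expnD leq_pexp2l //; nia.
Qed.

Lemma natr_mul_invX_le (R : numFieldType) (N m k c : nat) :
  (N <= m.+1 ^ k)%N -> (1 < m)%N -> (0 < k)%N -> (4 <= c)%N ->
  N%:R * (m%:R ^+ (c * k))^-1 <= 1 / m%:R ^+ 2 :> R.
Proof.
move=> N_le m_gt1 k_gt0 c_ge4.
apply: le_trans (_ : (m.+1 ^ k)%:R / m%:R ^+ (c * k) <= _).
  by apply: ler_wpM2r; rewrite ?invr_ge0 ?exprn_ge0 ?ler0n ?ler_nat.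
have m_gt0 : 0 < m%:R :> R by rewrite ltr0n ltnW.
rewrite ler_pdivrMr ?exprn_gt0 // mulrAC ler_pdivlMr ?exprn_gt0 //.
by rewrite mul1r -!natrX -natrM ler_nat expS_mul_sqr_leq.
Qed.

Lemma opt_le_gt0 {n m k : nat} {S : 'I_m -> {set 'I_n}} :
  opt_le S k -> (0 < n)%N -> (0 < m)%N /\ (0 < k)%N.
Proof.
case=> I [I_le_k I_cover] n_gt0.
have : Ordinal n_gt0 \in union_of S I by rewrite I_cover inE.
case/bigcupP => i iI _; split; first exact: leq_ltn_trans (leq0n i) (ltn_ord i).
by apply: leq_trans I_le_k; rewrite card_gt0; apply/set0Pn; exists i.
Qed.

Theorem lemma3p9 (R : realType) (rho p : R) (n m k : nat)
  (S : 'I_m -> {set 'I_n}) :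
  0 < rho -> rho < 1 ->
  opt_le S k ->
  0 <= p -> p <= 1 ->
  16%:R * k%:R * ln (m%:R : R) / (rho * n%:R) <= p ->
  1 - 1 / (m%:R ^+ 2) <=
  sample_prob p (fun U : {set 'I_n} =>
    [forall I : {set 'I_m},
      ((#|I| <= k)%N && covers S I U) ==>
      ((1 - rho) * n%:R <= (#|union_of S I|)%:R)]).
Proof.
move=> rho_gt0 rho_lt1 opt p_ge0 p_le1 p_ge.
have [n0 | n_gt0] := posnP n.
  apply: (@le_trans _ _ (sample_prob p predT)).
    by rewrite sample_probT lerBlDr lerDl divr_ge0 ?exprn_ge0.
  apply: le_sample_prob => // U _; apply/forallP => I; apply/implyP => _.
  by rewrite (_ : n%:R = 0 :> R) ?mulr0 ?n0.
have [m_gt0 k_gt0] := opt_le_gt0 opt n_gt0.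
have [m_le1 | m_gt1] := leqP m 1.
  have -> : m%:R = 1 :> R by rewrite (_ : m = 1%N) //; lia.
  by rewrite expr1n divr1 subrr sample_prob_ge0.
pose bad := [set I : {set 'I_m} |
  (#|I| <= k)%N && (#|union_of S I|%:R < (1 - rho) * n%:R)].
have card_bad : (#|bad| <= m.+1 ^ k)%N.
  have := card_small_sets 'I_m k; rewrite card_ord; apply: leq_trans.
  by apply/subset_leq_card/subsetP => I; rewrite !inE => /andP [].
rewrite sample_probC lerD2l lerN2.
apply: le_trans (_ : sample_prob p
    (fun U => [exists (I | I \in bad), U \subset union_of S I]) <= _).
  apply: le_sample_prob => // U /=; rewrite negb_forall => /existsP [I].
  rewrite negb_imply -ltNge => /andP [/andP [I_le_k U_cover] I_small].
  by apply/existsP; exists I; rewrite inE I_le_k I_small.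
apply: le_trans; first exact: sample_prob_exists.
apply: le_trans (_ : \sum_(I in bad) (m%:R ^+ (16 * k))^-1 <= _).
  apply: ler_sum => I; rewrite inE => /andP [_ I_small].
  by apply: sample_prob_subset_le_invX I_small; rewrite ?ltr0n // natrM.
by rewrite sumr_const -[_ *+ #|bad|]mulr_natl natr_mul_invX_le.
Qed.
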